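(* Let $\rho$ and $\sigma$ be density operators on a finite-dimensional complex Hilbert space $\mathcal{H}$ and let $\alpha>0$, $\alpha\neq 1$. Then the quantum relative $\alpha$-entropy satisfies $S_{\alpha}(\rho\|\sigma)\ge 0$, and $S_{\alpha}(\rho\|\sigma)=0$ if and only if $\rho=\sigma$.
   Context: A density operator is a positive semidefinite operator of unit trace; $\operatorname{supp}(\rho)$ is the span of the eigenvectors of $\rho$ with nonzero eigenvalues. For $\alpha>0$, $\alpha\neq1$, the quantum relative $\alpha$-entropy is $$S_{\alpha}(\rho\|\sigma)=\frac{\alpha}{1-\alpha}\log\operatorname{Tr}(\rho\sigma^{\alpha-1})-\frac{1}{1-\alpha}\log\operatorname{Tr}(\rho^{\alpha})+\log\operatorname{Tr}(\sigma^{\alpha})$$ whenever $\operatorname{supp}(\rho)\subseteq\operatorname{supp}(\sigma)$ (powers of $\sigma$ with negative exponent taken on its support), and $S_{\alpha}(\rho\|\sigma)=+\infty$ otherwise. Conventions: $0\cdot(\pm\infty)=0$, $\log 0=-\infty$, $\log(+\infty)=+\infty$. *)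

From HB Require Import structures.
From mathcomp Require Import all_boot all_order all_algebra.
From mathcomp Require Import complex.
From mathcomp Require Import reals ereal exp.

Set Implicit Arguments.
Unset Strict Implicit.
Unset Printing Implicit Defensive.

Import Order.TTheory GRing.Theory Num.Theory.
Local Open Scope ring_scope.
Local Open Scope complex_scope.

Section QuantumRenyi.
Variable R : realType.
Local Notation C := R[i].

Definition adjmx m n (A : 'M[C]_(m, n)) : 'M[C]_(n, m) := (map_mx conjc A)^T.

Definition psdmx n (A : 'M[C]_n) : Prop :=
  adjmx A = A /\ forall v : 'rV[C]_n, 0 <= (v *m A *m adjmx v) 0 0.

Definition density n (A : 'M[C]_n) : Prop := psdmx A /\ \tr A = 1.

(* Eigenvalue list of A given by the spectral decomposition
   A = invmx (spectralmx A) *m diag_mx (spectral_diag A) *m spectralmx A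
   (valid for normal, in particular Hermitian, matrices). *)

Definition supp n (A : 'M[C]_n) : 'M[C]_n :=
  (\sum_(i < n | spectral_diag A 0 i != 0) eigenspace A (spectral_diag A 0 i))%MS.

(* scalar power t |-> t^a on the positive reals, and 0 on the rest
   (i.e. the power is taken on the support) *)
Definition cpow (a : R) (z : C) : C :=
  if 0 < complex.Re z then ((powR (complex.Re z) a)%:C)%C else 0.

Definition mxpowR n (A : 'M[C]_n) (a : R) : 'M[C]_n :=
  invmx (spectralmx A) *m diag_mx (map_mx (cpow a) (spectral_diag A))
    *m spectralmx A.

Definition S_alpha n (alpha : R) (rho sigma : 'M[C]_n) : \bar R :=
  if (supp rho <= supp sigma)%MS then
    (alpha / (1 - alpha) * ln (complex.Re (\tr (rho *m mxpowR sigma (alpha - 1))))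
     - 1 / (1 - alpha) * ln (complex.Re (\tr (mxpowR rho alpha)))
     + ln (complex.Re (\tr (mxpowR sigma alpha))))%:E
  else +oo%E.

End QuantumRenyi.

(* Diagonalise rho = sum_i p_i u_i^* u_i and sigma = sum_j q_j v_j^* v_j in
   orthonormal eigenbases.  The overlaps T_ij = |<u_i, v_j>|^2 form a doubly
   stochastic matrix and Tr (rho sigma^(alpha-1)) = sum_ij T_ij p_i q_j^(alpha-1),
   so S_alpha only involves A = sum_ij T_ij p_i q_j^(alpha-1),
   B = sum_i p_i^alpha and C = sum_j q_j^alpha.  Hoelder's inequality for the
   weights T_ij, applied to (p_i q_j^(alpha-1), q_j^alpha) with exponent alpha
   when alpha < 1 (supp rho <= supp sigma takes care of the q_j = 0 terms) and to
   (p_i^alpha, q_j^alpha) with exponent 1/alpha when alpha > 1, shows that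
   alpha ln A + (1 - alpha) ln C - ln B has the sign of 1 - alpha, i.e.
   S_alpha >= 0.  Equality in Hoelder forces p_i = c q_j whenever T_ij != 0,
   which means rho = c sigma, and comparing traces gives c = 1. *)

From HB Require Import structures.
From mathcomp Require Import all_boot all_order all_algebra.
From mathcomp Require Import complex sesquilinear spectral.
From mathcomp Require Import reals ereal sequences exp.
From mathcomp Require Import ring lra.

Set Implicit Arguments.
Unset Strict Implicit.
Unset Printing Implicit Defensive.

Import Order.TTheory GRing.Theory Num.Theory.
Local Open Scope ring_scope.

Lemma leif_wpM2l (R : numDomainType) (w x y : R) (c : bool) :
  0 <= w -> x <= y ?= iff c -> w * x <= w * y ?= iff (w == 0) || c.
Proof.
rewrite le_eqVlt => /predU1P[<-|w_gt0] lexy.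
  by rewrite !mul0r eqxx; apply/leifP; rewrite /= eqxx.
by rewrite (gt_eqF w_gt0) (mono_leif (ler_pM2l w_gt0)).
Qed.

Section WeightedAGM.
Variable R : realType.
Implicit Types t x y : R.

Lemma ln_powR_mul x y t s : 0 < x -> 0 < y ->
  ln (x `^ t * y `^ s) = t * ln x + s * ln y.
Proof. by move=> x0 y0; rewrite lnM ?posrE ?powR_gt0 // !ln_powR. Qed.

Lemma powR_AGM2_lt t x y : 0 < t < 1 -> 0 < x -> 0 < y -> x != y ->
  x `^ t * y `^ (1 - t) < t * x + (1 - t) * y.
Proof.
move=> /andP[t_gt0 t_lt1] x_gt0 y_gt0 xy.
have t1_gt0 : 0 < 1 - t by rewrite subr_gt0.
set u := ln x; set v := ln y; set m := t * u + (1 - t) * v.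
have -> : x `^ t * y `^ (1 - t) = expR m by rewrite /powR !gt_eqF // -expRD.
have xE : x = expR m * expR (u - m) by rewrite -expRD addrC subrK lnK.
have yE : y = expR m * expR (v - m) by rewrite -expRD addrC subrK lnK.
have um_neq0 : u - m != 0.
  have -> : u - m = (1 - t) * (u - v) by rewrite /m; ring.
  rewrite mulf_neq0 ?(gt_eqF t1_gt0) // subr_eq0.
  by apply: contra xy => /eqP/ln_inj-> //; rewrite posrE.
have := expR_gt1Dx um_neq0; have := expR_ge1Dx (v - m).
have m_mean : t * (u - m) + (1 - t) * (v - m) = 0 by rewrite /m; ring.
have -> : t * x + (1 - t) * y =
    expR m * (t * expR (u - m) + (1 - t) * expR (v - m)) by rewrite xE yE; ring.
move=> ev eu; rewrite -[X in X < _]mulr1 (ltr_pM2l (expR_gt0 m)); nra.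
Qed.

Lemma powR_AGM2 t x y : 0 < t < 1 -> 0 <= x -> 0 <= y ->
  x `^ t * y `^ (1 - t) <= t * x + (1 - t) * y ?= iff (x == y).
Proof.
move=> t01; have /andP[t_gt0 t_lt1] := t01.
have t1_gt0 : 0 < 1 - t by rewrite subr_gt0.
have t0 := powR0 (lt0r_neq0 t_gt0); have t10 := powR0 (lt0r_neq0 t1_gt0).
rewrite !le_eqVlt => /predU1P[<-|x_gt0] /predU1P[<-|y_gt0]; apply/leifP.
- by rewrite eqxx /= t0 t10 !(mul0r, mulr0, addr0).
- by rewrite lt_eqF //= t0 !(mul0r, mulr0, add0r) mulr_gt0.
- by rewrite gt_eqF //= t10 !(mulr0, addr0) mulr_gt0.
have [<-|xy] := eqVneq x y; last exact: powR_AGM2_lt.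
by rewrite -powRD ?subrKC ?powRr1 ?oner_eq0 ?ltW //; apply/eqP; ring.
Qed.

End WeightedAGM.

Section WeightedHoelder.
Variables (R : realType) (I : finType) (w a b : I -> R) (t : R).
Hypotheses (t01 : 0 < t < 1) (w_ge0 : forall i, 0 <= w i)
  (a_ge0 : forall i, 0 <= a i) (b_ge0 : forall i, 0 <= b i).
Local Notation Sa := (\sum_i w i * a i).
Local Notation Sb := (\sum_i w i * b i).
Hypotheses (Sa_gt0 : 0 < Sa) (Sb_gt0 : 0 < Sb).

Lemma hoelder_sum :
  \sum_i w i * (a i `^ t * b i `^ (1 - t)) <= Sa `^ t * Sb `^ (1 - t)
    ?= iff [forall i, (w i == 0) || (a i / Sa == b i / Sb)].
Proof.
set x := fun i => a i / Sa; set y := fun i => b i / Sb.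
have x_ge0 i : 0 <= x i := divr_ge0 (a_ge0 i) (ltW Sa_gt0).
have y_ge0 i : 0 <= y i := divr_ge0 (b_ge0 i) (ltW Sb_gt0).
have K_gt0 : 0 < Sa `^ t * Sb `^ (1 - t) by rewrite mulr_gt0 ?powR_gt0.
have amE : \sum_i w i * (t * x i + (1 - t) * y i) = 1.
  rewrite (eq_bigr (fun i => t / Sa * (w i * a i) + (1 - t) / Sb * (w i * b i))).
    by rewrite big_split /= -!mulr_sumr !mulfVK ?gt_eqF // subrKC.
  by move=> i _; rewrite /x /y; ring.
have gmE i : a i `^ t * b i `^ (1 - t) =
    Sa `^ t * Sb `^ (1 - t) * (x i `^ t * y i `^ (1 - t)).
  have aE : a i = Sa * x i by rewrite /x mulrC divfK ?gt_eqF.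
  have bE : b i = Sb * y i by rewrite /y mulrC divfK ?gt_eqF.
  rewrite {1}aE {1}bE (powRM t (ltW Sa_gt0) (x_ge0 i)).
  by rewrite (powRM (1 - t) (ltW Sb_gt0) (y_ge0 i)); ring.
have := leif_sum (P := xpredT)
  (fun i _ => leif_wpM2l (w_ge0 i) (powR_AGM2 t01 (x_ge0 i) (y_ge0 i))).
rewrite amE -(mono_leif (ler_pM2l K_gt0)) mulr1 mulr_sumr.
by under eq_bigr do rewrite mulrCA -gmE.
Qed.

End WeightedHoelder.

Lemma psumr_gt0 (R : numDomainType) (I : finType) (F : I -> R) i :
  (forall j, 0 <= F j) -> 0 < F i -> 0 < \sum_j F j.
Proof. by move=> F_ge0 Fi_gt0; rewrite (bigD1 i) //= ltr_wpDr // sumr_ge0. Qed.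

Lemma psumr_exists_gt0 (R : numDomainType) (I : finType) (F : I -> R) :
  (forall j, 0 <= F j) -> \sum_j F j != 0 -> exists i, 0 < F i.
Proof.
by move=> F_ge0 /eqP/(psumr_neq0P (fun j _ => F_ge0 j))[i /andP[_ Fi]]; exists i.
Qed.

Definition proportional_on (R : pzRingType) n (T : 'I_n -> 'I_n -> R)
    (p q : 'I_n -> R) :=
  exists c, forall i j, T i j != 0 -> p i = c * q j.

Section ClassicalRenyi.
Variables (R : realType) (n : nat) (p q : 'I_n -> R) (T : 'I_n -> 'I_n -> R).
Variable alpha : R.
Hypotheses (p_ge0 : forall i, 0 <= p i) (q_ge0 : forall j, 0 <= q j).
Hypotheses (p_sum1 : \sum_i p i = 1) (q_sum1 : \sum_j q j = 1).
Hypotheses (T_ge0 : forall i j, 0 <= T i j)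
  (T_row1 : forall i, \sum_j T i j = 1) (T_col1 : forall j, \sum_i T i j = 1).
Hypothesis T_supp : forall i j, p i != 0 -> q j = 0 -> T i j = 0.
Hypotheses (alpha_gt0 : 0 < alpha) (alpha_neq1 : alpha != 1).

Local Notation A := (\sum_i p i * \sum_j T i j * q j `^ (alpha - 1)).
Local Notation B := (\sum_i p i `^ alpha).
Local Notation C := (\sum_j q j `^ alpha).

Let sum_pair_row (f : 'I_n -> R) :
  \sum_(z : 'I_n * 'I_n) T z.1 z.2 * f z.1 = \sum_i f i.
Proof.
rewrite -(pair_bigA _ (fun i j => T i j * f i)) /=.
by apply: eq_bigr => i _; rewrite -mulr_suml T_row1 mul1r.
Qed.

Let sum_pair_col (f : 'I_n -> R) :
  \sum_(z : 'I_n * 'I_n) T z.1 z.2 * f z.2 = \sum_j f j.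
Proof.
rewrite -(pair_bigA _ (fun i j => T i j * f j)) /= exchange_big /=.
by apply: eq_bigr => j _; rewrite -mulr_suml T_col1 mul1r.
Qed.

Let sum_pair_A :
  A = \sum_(z : 'I_n * 'I_n) T z.1 z.2 * (p z.1 * q z.2 `^ (alpha - 1)).
Proof.
rewrite -(pair_bigA _ (fun i j => T i j * (p i * q j `^ (alpha - 1)))) /=.
by apply: eq_bigr => i _; rewrite mulr_sumr; apply: eq_bigr => j _; ring.
Qed.

Let p_pos : exists i, 0 < p i.
Proof. by apply: psumr_exists_gt0; rewrite ?p_sum1 ?oner_neq0. Qed.

Let q_pos : exists j, 0 < q j.
Proof. by apply: psumr_exists_gt0; rewrite ?q_sum1 ?oner_neq0. Qed.

Let B_gt0 : 0 < B.
Proof.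
have [i pi_gt0] := p_pos.
by apply: (@psumr_gt0 _ _ _ i) => [j|]; rewrite ?powR_ge0 ?powR_gt0.
Qed.

Let C_gt0 : 0 < C.
Proof.
have [j qj_gt0] := q_pos.
by apply: (@psumr_gt0 _ _ _ j) => [k|]; rewrite ?powR_ge0 ?powR_gt0.
Qed.

Let A_gt0 : 0 < A.
Proof.
have [i pi_gt0] := p_pos.
have [j Tij_gt0] : exists j, 0 < T i j.
  by apply: psumr_exists_gt0; rewrite ?T_row1 ?oner_neq0.
have qj_gt0 : 0 < q j.
  rewrite lt_def q_ge0 andbT; apply: contraTneq Tij_gt0.
  by move=> /(T_supp (lt0r_neq0 pi_gt0)) ->; rewrite ltxx.
apply: (@psumr_gt0 _ _ _ i) => [k|].
  by rewrite mulr_ge0 ?sumr_ge0 // => l _; rewrite mulr_ge0 ?powR_ge0.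
rewrite mulr_gt0 //; apply: (@psumr_gt0 _ _ _ j) => [l|].
  by rewrite mulr_ge0 ?powR_ge0.
by rewrite mulr_gt0 ?powR_gt0.
Qed.

Let supp_p i j : T i j != 0 -> q j = 0 -> p i = 0.
Proof.
by move=> Tij qj0; apply: contraNeq Tij => /T_supp/(_ qj0) ->.
Qed.

Let hoelder_lt1 : alpha < 1 ->
  B <= A `^ alpha * C `^ (1 - alpha) ?= iff
  [forall z : 'I_n * 'I_n, (T z.1 z.2 == 0) ||
     (p z.1 * q z.2 `^ (alpha - 1) / A == q z.2 `^ alpha / C)].
Proof.
move=> alpha_lt1.
have alpha01 : 0 < alpha < 1 by rewrite alpha_gt0.
have := @hoelder_sum _ _ (fun z => T z.1 z.2)
  (fun z => p z.1 * q z.2 `^ (alpha - 1)) (fun z => q z.2 `^ alpha) alpha alpha01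
  (fun z => T_ge0 z.1 z.2) (fun z => mulr_ge0 (p_ge0 z.1) (powR_ge0 _ _))
  (fun z => powR_ge0 _ _).
rewrite /= -sum_pair_A (sum_pair_col (fun j => q j `^ alpha)) => /(_ A_gt0 C_gt0).
suff -> : \sum_(z : 'I_n * 'I_n) T z.1 z.2 *
    ((p z.1 * q z.2 `^ (alpha - 1)) `^ alpha * (q z.2 `^ alpha) `^ (1 - alpha)) = B.
  by [].
rewrite -(sum_pair_row (fun i => p i `^ alpha)); apply: eq_bigr => -[i j] _ /=.
have [->|Tij] := eqVneq (T i j) 0; first by rewrite !mul0r.
congr (_ * _); have [qj0|qj_neq0] := eqVneq (q j) 0.
  by rewrite (supp_p Tij qj0) mul0r powR0 ?mul0r // lt0r_neq0.
rewrite powRM ?powR_ge0 // -!powRrM -mulrA -powRD ?qj_neq0 ?implybT //.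
have -> : (alpha - 1) * alpha + alpha * (1 - alpha) = 0 by ring.
by rewrite powRr0 mulr1.
Qed.

Let hoelder_gt1 : 1 < alpha ->
  A <= B `^ alpha^-1 * C `^ (1 - alpha^-1) ?= iff
  [forall z : 'I_n * 'I_n, (T z.1 z.2 == 0) ||
     (p z.1 `^ alpha / B == q z.2 `^ alpha / C)].
Proof.
move=> alpha_gt1; have alpha_neq0 := lt0r_neq0 alpha_gt0.
have t01 : 0 < alpha^-1 < 1 by rewrite invr_gt0 alpha_gt0 invf_lt1.
have := @hoelder_sum _ _ (fun z => T z.1 z.2)
  (fun z => p z.1 `^ alpha) (fun z => q z.2 `^ alpha) alpha^-1 t01
  (fun z => T_ge0 z.1 z.2) (fun z => powR_ge0 _ _) (fun z => powR_ge0 _ _).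
rewrite /= (sum_pair_row (fun i => p i `^ alpha)).
rewrite (sum_pair_col (fun j => q j `^ alpha)) => /(_ B_gt0 C_gt0).
suff -> : \sum_(z : 'I_n * 'I_n) T z.1 z.2 *
    ((p z.1 `^ alpha) `^ alpha^-1 * (q z.2 `^ alpha) `^ (1 - alpha^-1)) = A.
  by [].
rewrite sum_pair_A; apply: eq_bigr => z _; congr (_ * (_ * _)).
  by rewrite -powRrM mulfV // powRr1.
by rewrite -powRrM; congr (_ `^ _); field.
Qed.

Let alpha_lt_gt1 : (alpha < 1) || (1 < alpha).
Proof. by rewrite -neq_lt. Qed.

Let gap := alpha * ln A + (1 - alpha) * ln C - ln B.

Let gap_ge0 : alpha < 1 -> 0 <= gap.
Proof.
move=> alpha_lt1; rewrite subr_ge0 -ln_powR_mul //.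
rewrite ler_ln ?posrE ?mulr_gt0 ?powR_gt0 //.
exact: (hoelder_lt1 alpha_lt1).1.
Qed.

Let gap_le0 : 1 < alpha -> gap <= 0.
Proof.
move=> alpha_gt1; have alpha_neq0 := lt0r_neq0 alpha_gt0.
have := (hoelder_gt1 alpha_gt1).1.
rewrite -ler_ln ?posrE ?mulr_gt0 ?powR_gt0 // ln_powR_mul // => le_lnA.
have := ler_wpM2l (ltW alpha_gt0) le_lnA.
have -> : alpha * (alpha^-1 * ln B + (1 - alpha^-1) * ln C) =
  ln B + (alpha - 1) * ln C by field.
rewrite /gap; lra.
Qed.

Let proportional_lt1 : alpha < 1 -> gap = 0 -> proportional_on T p q.
Proof.
move=> alpha_lt1 /eqP; rewrite subr_eq0 -ln_powR_mul // => /eqP eq_ln.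
have eqB : B = A `^ alpha * C `^ (1 - alpha).
  by apply: ln_inj; rewrite ?posrE ?mulr_gt0 ?powR_gt0.
exists (A / C) => i j Tij.
have := (hoelder_lt1 alpha_lt1).2; rewrite -eqB eqxx => /esym/forallP/(_ (i, j)).
rewrite /= (negbTE Tij) /= => /eqP h.
have [qj0|qj_neq0] := eqVneq (q j) 0; first by rewrite (supp_p Tij qj0) qj0 mulr0.
have qj_gt0 : 0 < q j by rewrite lt_def qj_neq0 q_ge0.
have Q_neq0 : q j `^ (alpha - 1) != 0 by rewrite lt0r_neq0 ?powR_gt0.
apply: (mulIf Q_neq0).
move: h; rewrite -(mulr_powRB1 (q_ge0 j) alpha_gt0).
move=> /(canRL (divfK (lt0r_neq0 A_gt0))) ->.
by field; rewrite gt_eqF.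
Qed.

Let proportional_gt1 : 1 < alpha -> gap = 0 -> proportional_on T p q.
Proof.
move=> alpha_gt1 /eqP; rewrite subr_eq0 => /eqP gap0.
have alpha_neq0 := lt0r_neq0 alpha_gt0.
have eqA : A = B `^ alpha^-1 * C `^ (1 - alpha^-1).
  apply: ln_inj; rewrite ?posrE ?mulr_gt0 ?powR_gt0 // ln_powR_mul //.
  apply: (mulfI alpha_neq0).
  have -> : alpha * ln A = ln B - (1 - alpha) * ln C by rewrite -gap0 addrK.
  by field.
exists ((B / C) `^ alpha^-1) => i j Tij.
have := (hoelder_gt1 alpha_gt1).2; rewrite -eqA eqxx => /esym/forallP/(_ (i, j)).
rewrite /= (negbTE Tij) /= => /eqP h.
have pE : p i `^ alpha = B / C * q j `^ alpha.
  by rewrite mulrAC -mulrA -h mulrC divfK ?gt_eqF.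
rewrite -[p i](powRr1 (p_ge0 i)) -(mulfV alpha_neq0) powRrM pE.
by rewrite powRM ?divr_ge0 ?powR_ge0 ?ltW // -(powRrM (q j)) mulfV // powRr1.
Qed.

Lemma renyi_classical_ge0_eq0 :
  let E := alpha / (1 - alpha) * ln A - 1 / (1 - alpha) * ln B + ln C in
  0 <= E /\ (E = 0 -> proportional_on T p q).
Proof.
have alpha1_neq0 : 1 - alpha != 0 by rewrite subr_eq0 eq_sym.
have -> : alpha / (1 - alpha) * ln A - 1 / (1 - alpha) * ln B + ln C =
  gap / (1 - alpha) by rewrite /gap; field.
split; last first.
  move=> /eqP; rewrite mulf_eq0 invr_eq0 (negbTE alpha1_neq0) orbF => /eqP.
  by case/orP: (alpha_lt_gt1) => [/proportional_lt1|/proportional_gt1].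
case/orP: (alpha_lt_gt1) => [alpha_lt1|alpha_gt1].
  by rewrite divr_ge0 ?gap_ge0 // subr_ge0 ltW.
by rewrite -mulrNN -invrN divr_ge0 ?oppr_ge0 ?gap_le0 // subr_le0 ltW.
Qed.

End ClassicalRenyi.

Section SpectralCalculus.
Variable R : realType.
Local Notation C := R[i].
Local Open Scope complex_scope.
Local Open Scope sesquilinear_scope.

Definition eigval n (A : 'M[C]_n) i := complex.Re (spectral_diag A 0 i).

Definition rdiag_mx n (f : 'I_n -> R) : 'M[C]_n := diag_mx (\row_i (f i)%:C).

Definition overlap n (P Q : 'M[C]_n) i j := complex.Re (`|(P *m Q^t*) i j| ^+ 2).

Lemma adjmxE m n (A : 'M[C]_(m, n)) : adjmx A = A^t*.
Proof. by rewrite /adjmx map_trmx. Qed.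

Lemma psdmx_herm n (A : 'M[C]_n) : psdmx A -> A \is hermsymmx.
Proof.
by case=> A_herm _; apply/is_hermitianmxP; rewrite expr0 scale1r -adjmxE A_herm.
Qed.

Lemma row_rdiag_mul n (f : 'I_n -> R) (M : 'M[C]_n) i :
  row i (rdiag_mx f *m M) = (f i)%:C *: row i M.
Proof. by rewrite row_mul row_diag_mx mxE -scalemxAl -rowE. Qed.

Lemma mxtrace_rdiag n (f : 'I_n -> R) : \tr (rdiag_mx f) = (\sum_i f i)%:C.
Proof. by rewrite mxtrace_diag rmorph_sum; apply: eq_bigr => i _; rewrite mxE. Qed.

Lemma mxtrace_unitary_conj n (P M : 'M[C]_n) : P \is unitarymx ->
  \tr (P^t* *m M *m P) = \tr M.
Proof. by move=> PU; rewrite mxtrace_mulC mulmxA (unitarymxP PU) mul1mx. Qed.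

Section Hermitian.
Variables (n : nat) (A : 'M[C]_n).
Hypothesis A_herm : A \is hermsymmx.
Local Notation P := (spectralmx A).

Lemma spectral_diag_eigval i : spectral_diag A 0 i = (eigval A i)%:C.
Proof.
have /mxOverP/(_ 0 i) := hermitian_spectral_diag_real A_herm.
by rewrite /eigval => /RRe_real.
Qed.

Lemma spectral_diag_rowE : spectral_diag A = \row_i (eigval A i)%:C.
Proof. by apply/rowP => i; rewrite mxE spectral_diag_eigval. Qed.

Lemma hermitian_spectralE : A = P^t* *m rdiag_mx (eigval A) *m P.
Proof.
have /hermitian_normalmx/orthomx_spectralP {1}-> := A_herm.
by rewrite (invmx_unitary (spectral_unitarymx A)) spectral_diag_rowE.
Qed.

Lemma row_spectral_eigen i : row i P *m A = (eigval A i)%:C *: row i P.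
Proof.
rewrite -row_mul [X in _ *m X]hermitian_spectralE !mulmxA.
by rewrite (unitarymxP (spectral_unitarymx A)) mul1mx row_rdiag_mul.
Qed.

Lemma mxtrace_eigval : \tr A = (\sum_i eigval A i)%:C.
Proof.
rewrite [X in \tr X]hermitian_spectralE mxtrace_unitary_conj ?spectral_unitarymx //.
exact: mxtrace_rdiag.
Qed.

End Hermitian.

Lemma eigval_ge0 n (A : 'M[C]_n) i : psdmx A -> 0 <= eigval A i.
Proof.
move=> A_psd; have /(_ (row i (spectralmx A))) := A_psd.2.
rewrite adjmxE row_spectral_eigen ?psdmx_herm // -scalemxAl mxE -dotmxE.
have /row_unitarymxP-> := spectral_unitarymx A.
by rewrite eqxx mulr1 ler0c.
Qed.

Lemma density_sum_eigval n (A : 'M[C]_n) : density A -> \sum_i eigval A i = 1.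
Proof. by case=> /psdmx_herm/mxtrace_eigval-> /complexI. Qed.

(* [cpow] vanishes off the positive reals, and so does [x `^ a] on [x >= 0]
   as long as [a != 0], since [0 `^ a = 0]. *)
Lemma mxpowR_spectral n (A : 'M[C]_n) a : psdmx A -> a != 0 ->
  mxpowR A a =
    (spectralmx A)^t* *m rdiag_mx (fun i => eigval A i `^ a) *m spectralmx A.
Proof.
move=> A_psd a_neq0; rewrite /mxpowR (invmx_unitary (spectral_unitarymx A)).
suff -> : map_mx (cpow a) (spectral_diag A) = \row_i (eigval A i `^ a)%:C by [].
apply/rowP => i; rewrite !mxE spectral_diag_eigval ?psdmx_herm // /cpow /=.
have := eigval_ge0 i A_psd; rewrite le_eqVlt => /predU1P[<-|->] //.
by rewrite ltxx powR0.
Qed.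

Lemma overlapE n (P Q : 'M[C]_n) i j :
  (overlap P Q i j)%:C = `|(P *m Q^t*) i j| ^+ 2.
Proof. by rewrite /overlap RRe_real // realX // normr_real. Qed.

Lemma overlap_ge0 n (P Q : 'M[C]_n) i j : 0 <= overlap P Q i j.
Proof. by rewrite -ler0c overlapE exprn_ge0. Qed.

Lemma overlap_eq0 n (P Q : 'M[C]_n) i j :
  (overlap P Q i j == 0) = ((P *m Q^t*) i j == 0).
Proof.
by rewrite -(inj_eq (@complexI R)) rmorph0 overlapE sqrf_eq0 normr_eq0.
Qed.

Lemma unitary_row_norm n (U : 'M[C]_n) i :
  U \is unitarymx -> \sum_j `|U i j| ^+ 2 = 1.
Proof.
move=> /row_unitarymxP/(_ i i); rewrite eqxx mulr1n dotmxE !mxE => <-.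
by apply: eq_bigr => j _; rewrite !mxE normCK.
Qed.

Lemma unitary_col_norm n (U : 'M[C]_n) j :
  U \is unitarymx -> \sum_i `|U i j| ^+ 2 = 1.
Proof.
rewrite -trmxC_unitary => /(unitary_row_norm j) <-.
by apply: eq_bigr => i _; rewrite !mxE norm_conjC.
Qed.

Lemma mul_trC_unitarymx n (P Q : 'M[C]_n) :
  P \is unitarymx -> Q \is unitarymx -> P *m Q^t* \is unitarymx.
Proof. by move=> PU QU; apply: mul_unitarymx PU _; rewrite trmxC_unitary. Qed.

Lemma overlap_row_sum1 n (P Q : 'M[C]_n) i : P \is unitarymx -> Q \is unitarymx ->
  \sum_j overlap P Q i j = 1.
Proof.
move=> PU QU; apply: complexI; rewrite rmorph_sum rmorph1.
have PQ := mul_trC_unitarymx PU QU.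
rewrite -(unitary_row_norm i PQ).
by apply: eq_bigr => k _; exact: overlapE.
Qed.

Lemma overlap_col_sum1 n (P Q : 'M[C]_n) j : P \is unitarymx -> Q \is unitarymx ->
  \sum_i overlap P Q i j = 1.
Proof.
move=> PU QU; apply: complexI; rewrite rmorph_sum rmorph1.
have PQ := mul_trC_unitarymx PU QU.
rewrite -(unitary_col_norm j PQ).
by apply: eq_bigr => k _; exact: overlapE.
Qed.

Lemma overlap_self n (P : 'M[C]_n) i j : P \is unitarymx ->
  overlap P P i j = (i == j)%:R.
Proof.
move=> PU; apply: complexI; rewrite overlapE (unitarymxP PU) mxE rmorph_nat.
by case: (i == j); rewrite ?normr1 ?normr0 ?expr1n ?expr0n.
Qed.

Lemma mxtrace_spectral_mul n (P Q : 'M[C]_n) (f g : 'I_n -> R) :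
  P \is unitarymx -> Q \is unitarymx ->
  \tr ((P^t* *m rdiag_mx f *m P) *m (Q^t* *m rdiag_mx g *m Q)) =
  (\sum_i f i * \sum_j overlap P Q i j * g j)%:C.
Proof.
move=> PU QU; set U := P *m Q^t*.
have -> : (P^t* *m rdiag_mx f *m P) *m (Q^t* *m rdiag_mx g *m Q) =
    P^t* *m (rdiag_mx f *m U *m rdiag_mx g *m Q) by rewrite /U !mulmxA.
have QP : Q *m P^t* = U^t* by rewrite /U trmx_mul map_mxM trmxCK.
rewrite mxtrace_mulC -[_ *m Q *m _]mulmxA QP /mxtrace rmorph_sum.
apply: eq_bigr => i _; rewrite mxE rmorphM rmorph_sum mulr_sumr.
apply: eq_bigr => k _; rewrite mul_mx_diag mul_diag_mx !mxE !rmorphM /=.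
by rewrite overlapE normCK mxE; ring.
Qed.

Lemma row_spectral_supp n (A : 'M[C]_n) i : A \is hermsymmx ->
  eigval A i != 0 -> (row i (spectralmx A) <= supp A)%MS.
Proof.
move=> A_herm ev_neq0; apply: (sumsmx_sup i).
  by rewrite spectral_diag_eigval // fmorph_eq0.
by apply/eigenspaceP; rewrite row_spectral_eigen // spectral_diag_eigval.
Qed.

Lemma supp_sub_kermx n (A : 'M[C]_n) j : A \is hermsymmx ->
  eigval A j = 0 -> (supp A <= kermx ((row j (spectralmx A))^t*))%MS.
Proof.
move=> A_herm ev0; apply/sumsmx_subP => i ev_neq0; rewrite sub_kermx.
set l := spectral_diag A 0 i; set E := eigenspace A l.
have EA : E *m A = l *: E by apply/eigenspaceP.
have A_adj : A^t* = A.
  by have /is_hermitianmxP := A_herm; rewrite expr0 scale1r => <-.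
have Av : A *m (row j (spectralmx A))^t* = 0.
  rewrite -{1}A_adj -map_mxM -trmx_mul row_spectral_eigen // ev0 scale0r.
  by rewrite trmx0 map_mx0.
have : l *: (E *m (row j (spectralmx A))^t*) = 0.
  by rewrite scalemxAl -EA -mulmxA Av mulmx0.
by move/eqP; rewrite scalemx_eq0 (negbTE ev_neq0).
Qed.

Lemma overlap_supp n (rho sigma : 'M[C]_n) i j :
  rho \is hermsymmx -> sigma \is hermsymmx -> (supp rho <= supp sigma)%MS ->
  eigval rho i != 0 -> eigval sigma j = 0 ->
  overlap (spectralmx rho) (spectralmx sigma) i j = 0.
Proof.
move=> rho_herm sigma_herm supp_sub ev_neq0 ev0; apply/eqP; rewrite overlap_eq0.
have := submx_trans (submx_trans (row_spectral_supp rho_herm ev_neq0) supp_sub)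
  (supp_sub_kermx sigma_herm ev0).
rewrite sub_kermx => /eqP/matrixP/(_ 0 0); rewrite [X in _ = X]mxE => <-.
by rewrite !mxE; apply/eqP; apply: eq_bigr => k _; rewrite !mxE.
Qed.

Lemma hermitian_proportional_overlap n (rho sigma : 'M[C]_n) :
  rho \is hermsymmx -> sigma \is hermsymmx ->
  proportional_on (overlap (spectralmx rho) (spectralmx sigma))
    (eigval rho) (eigval sigma) ->
  exists c : R, rho = c%:C *: sigma.
Proof.
move=> rho_herm sigma_herm [c prop]; exists c.
set P := spectralmx rho; set Q := spectralmx sigma; set U := P *m Q^t*.
have PU : P \is unitarymx := spectral_unitarymx rho.
have UQ : U *m Q = P by rewrite /U mulmxKtV ?spectral_unitarymx.
have PU_adj : P^t* *m U = Q^t*.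
  have := PU; rewrite -trmxC_unitary => /unitarymxP; rewrite trmxCK => PP.
  by rewrite /U mulmxA PP mul1mx.
have U_eq0 i j : (overlap P Q i j == 0) = (U i j == 0) := overlap_eq0 P Q i j.
clearbody U.
have DU : rdiag_mx (eigval rho) *m U = c%:C *: (U *m rdiag_mx (eigval sigma)).
  apply/matrixP => i j; rewrite mul_diag_mx mul_mx_diag !mxE.
  have [->|Uij] := eqVneq (U i j) 0; first by rewrite !(mulr0, mul0r).
  by rewrite (prop i j) ?U_eq0 // rmorphM /=; ring.
rewrite (hermitian_spectralE rho_herm) (hermitian_spectralE sigma_herm) -/P -/Q.
rewrite -{2}UQ mulmxA -[P^t* *m _ *m U]mulmxA DU -scalemxAr -!scalemxAl.
by rewrite mulmxA PU_adj.
Qed.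

Lemma density_proportional_overlap n (rho sigma : 'M[C]_n) :
  density rho -> density sigma ->
  proportional_on (overlap (spectralmx rho) (spectralmx sigma))
    (eigval rho) (eigval sigma) ->
  rho = sigma.
Proof.
move=> [/psdmx_herm rho_herm tr_rho] [/psdmx_herm sigma_herm tr_sigma].
move=> /(hermitian_proportional_overlap rho_herm sigma_herm)[c rho_sigma].
move: tr_rho; rewrite rho_sigma mxtraceZ tr_sigma mulr1 => ->.
by rewrite scale1r.
Qed.

Lemma mxtrace_mxpowR n (A : 'M[C]_n) a : psdmx A -> a != 0 ->
  \tr (mxpowR A a) = (\sum_i eigval A i `^ a)%:C.
Proof.
move=> A_psd a_neq0; rewrite mxpowR_spectral // mxtrace_unitary_conj //.
  exact: mxtrace_rdiag.
exact: spectral_unitarymx.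
Qed.

Lemma S_alpha_spectral n (rho sigma : 'M[C]_n) (alpha : R) :
  psdmx rho -> psdmx sigma -> alpha != 0 -> alpha != 1 ->
  (supp rho <= supp sigma)%MS ->
  S_alpha alpha rho sigma =
  (alpha / (1 - alpha) * ln (\sum_i eigval rho i *
       \sum_j overlap (spectralmx rho) (spectralmx sigma) i j *
         eigval sigma j `^ (alpha - 1))
   - 1 / (1 - alpha) * ln (\sum_i eigval rho i `^ alpha)
   + ln (\sum_j eigval sigma j `^ alpha))%:E.
Proof.
move=> rho_psd sigma_psd alpha_neq0 alpha_neq1 supp_sub.
have alpha1_neq0 : alpha - 1 != 0 by rewrite subr_eq0.
have tr_rho_sigma : \tr (rho *m mxpowR sigma (alpha - 1)) =
    (\sum_i eigval rho i *
       \sum_j overlap (spectralmx rho) (spectralmx sigma) i j *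
         eigval sigma j `^ (alpha - 1))%:C.
  rewrite {1}(hermitian_spectralE (psdmx_herm rho_psd)) mxpowR_spectral //.
  by rewrite mxtrace_spectral_mul ?spectral_unitarymx.
by rewrite /S_alpha supp_sub tr_rho_sigma !mxtrace_mxpowR.
Qed.

Lemma S_alpha_self n (rho : 'M[C]_n) (alpha : R) :
  psdmx rho -> 0 < alpha -> alpha != 1 -> S_alpha alpha rho rho = 0%E.
Proof.
move=> rho_psd alpha_gt0 alpha_neq1.
rewrite S_alpha_spectral ?lt0r_neq0 ?submx_refl //.
have PU := spectral_unitarymx rho.
have -> : \sum_i eigval rho i *
      \sum_j overlap (spectralmx rho) (spectralmx rho) i j *
        eigval rho j `^ (alpha - 1) = \sum_i eigval rho i `^ alpha.
  apply: eq_bigr => i _; rewrite (bigD1 i) //= overlap_self // eqxx mul1r.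
  rewrite big1 ?addr0 => [|j ji]; first by rewrite mulr_powRB1 ?eigval_ge0.
  by rewrite overlap_self // eq_sym (negbTE ji) mul0r.
have alpha1_neq0 : 1 - alpha != 0 by rewrite subr_eq0 eq_sym.
by congr EFin; field.
Qed.

End SpectralCalculus.

Theorem lemma3 (R : realType) (n : nat) (rho sigma : 'M[R[i]]_n) (alpha : R) :
  density rho -> density sigma -> 0 < alpha -> alpha != 1 ->
  (0%E <= S_alpha alpha rho sigma)%E /\
  (S_alpha alpha rho sigma = 0%E <-> rho = sigma).
Proof.
move=> rho_dens sigma_dens alpha_gt0 alpha_neq1.
have [[rho_psd _] [sigma_psd _]] := (rho_dens, sigma_dens).
have [supp_sub|supp_nsub] := boolP (supp rho <= supp sigma)%MS; last first.
  rewrite /S_alpha (negbTE supp_nsub); split; first exact: leey.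
  by split => // rho_sigma; rewrite rho_sigma submx_refl in supp_nsub.
have [U V] := (spectral_unitarymx rho, spectral_unitarymx sigma).
have [E_ge0 E_eq0] := renyi_classical_ge0_eq0
  (fun i => eigval_ge0 i rho_psd) (fun j => eigval_ge0 j sigma_psd)
  (density_sum_eigval rho_dens) (density_sum_eigval sigma_dens)
  (@overlap_ge0 _ _ _ _) (fun i => overlap_row_sum1 i U V)
  (fun j => overlap_col_sum1 j U V)
  (fun i j => overlap_supp (psdmx_herm rho_psd) (psdmx_herm sigma_psd) supp_sub)
  alpha_gt0 alpha_neq1.
have S_alphaE := S_alpha_spectral rho_psd sigma_psd (lt0r_neq0 alpha_gt0)
  alpha_neq1 supp_sub.
split; first by rewrite S_alphaE lee_fin.
split=> [|<-]; last exact: S_alpha_self.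
by rewrite S_alphaE => -[/E_eq0]; apply: density_proportional_overlap.
Qed.
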